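(* In $Rex(w_{0,4})$, where $w_{0,4}=s_1s_2s_1s_3s_2s_1\in S_4$, consider the path morphisms of the paths $212321\to213231\to212321\to213231$ and $212321\to213231$; they are equal. Likewise, the path morphisms of $213231\to212321\to213231\to212321$ and $213231\to212321$ are equal. Equivalently, in the conflated expression graph $\Gamma_{w_{0,4}}$, with $A$ the cloud $\{212321\}$ and $B$ the cloud $\{213231,231231,213213,231213\}$, one has $f([A,B,A,B])=f([A,B])$ and $f([B,A,B,A])=f([B,A])$.
   Context: $S_4$ has simple reflections $s_i=(i\ i+1)$, $i=1,2,3$; a word such as $212321$ denotes the reduced expression $s_2s_1s_2s_3s_2s_1$. The rex graph $Rex(w)$ has as vertices the reduced expressions of $w$, with an edge between two that differ by one braid relation on consecutive letters: $i(i+1)i\leftrightarrow(i+1)i(i+1)$ (adjacent edge) or $ij\leftrightarrow ji$ with $|i-j|\ge2$ (distant edge). Let $R=\mathbb{R}[x_1,\dots,x_4]$, graded with $\deg x_i=2$, $s_i$ swapping $x_i,x_{i+1}$; $B_i=R\otimes_{R^{s_i}}R(1)$ and $B_{i_1\cdots i_k}=B_{i_1}\otimes_R\cdots\otimes_RB_{i_k}$. For $i\ne j$ with $s_is_j$ of order $m_{ij}\in\{2,3\}$, $f_{ij}:B_iB_jB_i\cdots\to B_jB_iB_j\cdots$ ($m_{ij}$ factors) is the unique degree-$0$ bimodule map sending $1\otimes\cdots\otimes1\mapsto1\otimes\cdots\otimes1$; traversing an edge from $\underline u$ to $\underline v$ (replacing a consecutive $iji\cdots$ by $jij\cdots$)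 gives $\mathrm{Id}\otimes f_{ij}\otimes\mathrm{Id}:B_{\underline u}\to B_{\underline v}$, and the path morphism $f(p)$ is the composite along the path. A cloud is a class of reduced expressions under the relation generated by distant edges; the conflated expression graph has clouds as vertices and an edge between distinct clouds joined by an adjacent edge, and the path morphism of a path of clouds is $f$ of a path in $Rex(w)$ visiting the clouds in that order, moving inside clouds by distant edges and between consecutive clouds by one adjacent edge (here the unique adjacent edge between $A$ and $B$ is $212321$—$213231$). *)

From mathcomp Require Import all_boot all_algebra all_fingroup.
From mathcomp Require Import Rstruct.
From mathcomp Require Import mpoly.
From Stdlib Require Import Reals.

Unset Implicit Arguments.
Unset Strict Implicit.
Unset Printing Implicit Defensive.

Import GRing.Theory.
Local Open Scope ring_scope.

(* Concrete model of Bott-Samelson bimodules.                                *)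
(*   R = R[x_1..x_4].  For a word w = i_1 ... i_k (letters in {1,2,3}),      *)
(*   B_w = R (x)_{R^{s_{i_1}}} R (x)_{R^{s_{i_2}}} ... (x)_{R^{s_{i_k}}} R    *)
(*   (grading shifts omitted; they are uniform for words of equal length).   *)
(*   Since R is commutative, B_w is the quotient of the polynomial ring      *)
(*   R^{(x)(k+1)} = R[x_{j,a} | 0 <= j <= k, 1 <= a <= 4]  ("block" j is the  *)
(*   j-th tensor factor) by the ideal I_w generated by the balancing          *)
(*   relations  f(block j) - f(block j+1)  for f in R^{s_{i_{j+1}}}.         *)
(*   The element 1 (x) ... (x) 1 is the class of the constant 1; the left    *)
(*   (resp. right) R-action is multiplication by block 0 (resp. block k).    *)
(*   Variable x_{j,a} (a = 1..4) is the index 4*j + (a-1).                    *)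

Notation nv k := (4 * k + 3).+1.

Notation BPoly k := {mpoly R[nv k]}.

Definition sref (i : nat) : 'S_4 := tperm (inord i.-1 : 'I_4) (inord i).

Definition invariant (i : nat) (f : {mpoly R[4]}) : Prop := msym (sref i) f = f.

Definition blk (k j : nat) (f : {mpoly R[4]}) : BPoly k :=
  comp_mpoly [tuple ('X_(inord (4 * j + a)%N) : BPoly k) | a < 4] f.

Definition inI (k : nat) (w : seq nat) (p : BPoly k) : Prop :=
  exists s : seq (BPoly k * nat * {mpoly R[4]}),
    (forall t, t \in s -> ltn t.1.2 k /\ invariant (nth 0%N w t.1.2) t.2) /\
    p = \sum_(t <- s) t.1.1 * (blk k t.1.2 t.2 - blk k t.1.2.+1 t.2).

Definition eqB (k : nat) (w : seq nat) (p q : BPoly k) : Prop := inI k w (p - q).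

(* F (acting on representatives) induces a degree-0 (R,R)-bimodule map
   B_u -> B_v sending 1 (x) ... (x) 1 to 1 (x) ... (x) 1.  Any such map on the
   quotients admits a linear lift F on representatives, and conversely. *)
Definition braid_map (k : nat) (u v : seq nat) (F : BPoly k -> BPoly k) : Prop :=
  (forall (a : R) (p q : BPoly k), F (a *: p + q) = a *: F p + F q) /\
  (forall p, inI k u p -> inI k v (F p)) /\
  (forall r p, eqB k v (F (blk k 0 r * p)) (blk k 0 r * F p)) /\
  (forall r p, eqB k v (F (p * blk k k r)) (F p * blk k k r)) /\
  (forall (d : nat) p, p \is d.-homog ->
     exists q : BPoly k, q \is d.-homog /\ eqB k v (F p) q) /\
  eqB k v (F 1) 1.

(* Id_{B_a} (x) F (x) Id_{B_c} on representatives, where a has length la,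
   c has length lc and F acts on words of length 3.  A monomial of
   R^{(x)(la+3+lc+1)} is split as (blocks < la) * (blocks la..la+3)
   * (blocks > la+3); F is applied to the middle part (shifted to blocks
   0..3) and the result shifted back. *)
Definition idtens (la lc : nat) (F : BPoly 3 -> BPoly 3)
    (p : BPoly (la + 3 + lc)) : BPoly (la + 3 + lc) :=
  let k := (la + 3 + lc)%N in
  \sum_(m <- msupp p)
    p@_m *: ((\prod_(i < nv k | ltn (divn i 4) la) 'X_i ^+ m i)
             * comp_mpoly [tuple ('X_(inord (4 * la + i)%N) : BPoly k) | i < nv 3]
                 (F (\prod_(i < nv 3) 'X_i ^+ m (inord (4 * la + i)%N)))
             * (\prod_(i < nv k | ltn (la + 3)%N (divn i 4)) 'X_i ^+ m i)).

(* The adjacent edge 212321 -- 213231 of Rex(w_0) in S_4: the braid move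
   232 <-> 323 in positions 3..5, i.e. a = 21, c = 1. *)
Definition wA : seq nat := [:: 2; 1; 2; 3; 2; 1]%N.
Definition wB : seq nat := [:: 2; 1; 3; 2; 3; 1]%N.

From Pilot Require Import Defs.
From mathcomp Require Import all_boot all_algebra all_fingroup.
From mathcomp Require Import Rstruct.
From mathcomp Require Import mpoly.
From Stdlib Require Import Reals.
From mathcomp Require Import ring zify.

(* Write f = f23, g = f32 and D = f g f - f : B_232 -> B_323.  D is a degree-0
   bimodule map, and D(1) = 0 because f and g send 1 to 1.  Modulo its defining
   ideal, B_232 is generated as an R-bimodule by 1 and U = x_2 placed in the
   second tensor factor, so D vanishes once D(U) does.  Now D(U) is an element of
   degree one of B_323 on which the left and right actions of x_2 + x_3 agree,
   and evaluating at the points of B_323 attached to the subexpressions of 323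
   shows that such an element is zero.  The same argument, with U = x_3 and
   2 x_2 + x_3 + x_4, kills g f g - g.  Finally Id_B21 (x) D (x) Id_B1 acts
   monomial by monomial through D on the middle tensor factors, so it vanishes
   together with D. *)

Set Implicit Arguments.
Unset Strict Implicit.
Unset Printing Implicit Defensive.
Import GRing.Theory Num.Theory.
Local Open Scope ring_scope.

Section Ideal.
Variables (k : nat) (w : seq nat).

Lemma inI0 : inI k w 0.
Proof. by exists [::]; split=> //; rewrite big_nil. Qed.

Lemma inID p q : inI k w p -> inI k w q -> inI k w (p + q).
Proof.
move=> [s1 [H1 ->]] [s2 [H2 ->]]; exists (s1 ++ s2); split; last by rewrite big_cat.
by move=> t; rewrite mem_cat => /orP[/H1|/H2].
Qed.

Lemma inIMl r p : inI k w p -> inI k w (r * p).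
Proof.
move=> [s [H ->]]; exists [seq ((r * t.1.1, t.1.2), t.2) | t <- s]; split.
  by move=> t /mapP [t' /H ht' ->].
by rewrite big_map mulr_sumr; apply: eq_bigr => t _ /=; rewrite mulrA.
Qed.

Lemma inIMr r p : inI k w p -> inI k w (p * r).
Proof. by move=> h; rewrite mulrC; apply: inIMl. Qed.

Lemma inIN p : inI k w p -> inI k w (- p).
Proof. by move=> h; rewrite -mulN1r; apply: inIMl. Qed.

Lemma inIB p q : inI k w p -> inI k w q -> inI k w (p - q).
Proof. by move=> hp hq; apply: inID => //; apply: inIN. Qed.

Lemma inIZ c p : inI k w p -> inI k w (c *: p).
Proof. by move=> h; rewrite -mul_mpolyC; apply: inIMl. Qed.

Lemma inI_sum (I : Type) (r : seq I) (F : I -> BPoly k) :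
  (forall i, inI k w (F i)) -> inI k w (\sum_(i <- r) F i).
Proof.
by move=> h; elim: r => [|x r IH]; rewrite ?big_nil ?big_cons; [apply: inI0 | apply: inID].
Qed.

Lemma inI_balance j f : (j < k)%nat -> Defs.invariant (nth 0 w j) f ->
  inI k w (blk k j f - blk k j.+1 f).
Proof.
move=> hj hf; exists [:: (1, j, f)]; split; last by rewrite big_seq1 mul1r.
by move=> t; rewrite inE => /eqP ->.
Qed.

Lemma eq_inI p q : p = q -> inI k w p -> inI k w q.
Proof. by move=> ->. Qed.

Lemma eqB_trans p q r : eqB k w p q -> eqB k w q r -> eqB k w p r.
Proof. by move=> h1 h2; have := inID h1 h2; rewrite addrA subrK. Qed.

End Ideal.

Section Linear.
Variables (k : nat) (F : BPoly k -> BPoly k).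
Hypothesis linF : forall (a : R) (p q : BPoly k), F (a *: p + q) = a *: F p + F q.

Lemma linD p q : F (p + q) = F p + F q.
Proof. by rewrite -[p]scale1r linF !scale1r. Qed.

Lemma lin0 : F 0 = 0.
Proof. by apply: (addrI (F 0)); rewrite -linD !addr0. Qed.

Lemma linZ a p : F (a *: p) = a *: F p.
Proof. by rewrite -[a *: p]addr0 linF lin0 addr0. Qed.

Lemma linN p : F (- p) = - F p.
Proof. by rewrite -scaleN1r linZ scaleN1r. Qed.

Lemma linB p q : F (p - q) = F p - F q.
Proof. by rewrite linD linN. Qed.

Lemma lin_sum (I : Type) (r : seq I) (G : I -> BPoly k) :
  F (\sum_(i <- r) G i) = \sum_(i <- r) F (G i).
Proof. by elim: r => [|x r IH]; rewrite ?big_nil ?lin0 // !big_cons linD IH. Qed.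

End Linear.

Definition bimod_map k u v (F : BPoly k -> BPoly k) :=
  [/\ forall (a : R) (p q : BPoly k), F (a *: p + q) = a *: F p + F q,
      forall p, inI k u p -> inI k v (F p),
      forall r p, eqB k v (F (blk k 0 r * p)) (blk k 0 r * F p),
      forall r p, eqB k v (F (p * blk k k r)) (F p * blk k k r) &
      forall (d : nat) p, p \is d.-homog ->
        exists q : BPoly k, q \is d.-homog /\ eqB k v (F p) q].
Arguments bimod_map k u v F : clear implicits.

Lemma braid_map_bimod k u v F : braid_map k u v F -> bimod_map k u v F.
Proof. by case=> [h1 [h2 [h3 [h4 [h5 _]]]]]; split. Qed.

Lemma braid_map1 k u v F : braid_map k u v F -> eqB k v (F 1) 1.
Proof. by case=> _ [_ [_ [_ [_ h]]]]. Qed.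

Lemma bimod_map_eqB k u v F p q :
  bimod_map k u v F -> eqB k u p q -> eqB k v (F p) (F q).
Proof. by case=> linF hI _ _ _ h; rewrite /eqB -(linB linF); apply: hI. Qed.

Lemma bimod_map_comp k u v x F G :
  bimod_map k u v F -> bimod_map k v x G -> bimod_map k u x (fun p => G (F p)).
Proof.
move=> hF hG; have [F1 F2 F3 F4 F5] := hF; have [G1 G2 G3 G4 G5] := hG; split.
- by move=> a p q; rewrite F1 G1.
- by move=> p /F2 /G2.
- by move=> r p; apply: eqB_trans (G3 r (F p)); apply: (bimod_map_eqB hG).
- by move=> r p; apply: eqB_trans (G4 r (F p)); apply: (bimod_map_eqB hG).
- move=> d p /F5 [q1 [hq1 e1]]; have [q2 [hq2 e2]] := G5 d q1 hq1.
  by exists q2; split=> //; apply: eqB_trans e2; apply: (bimod_map_eqB hG).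
Qed.

Lemma bimod_mapB k u v F G : bimod_map k u v F -> bimod_map k u v G ->
  bimod_map k u v (fun p => F p - G p).
Proof.
move=> [F1 F2 F3 F4 F5] [G1 G2 G3 G4 G5]; split.
- by move=> a p q; rewrite F1 G1 scalerBr; ring.
- by move=> p hp; apply: inIB; [apply: F2|apply: G2].
- by move=> r p; apply: eq_inI (inIB (F3 r p) (G3 r p)); ring.
- by move=> r p; apply: eq_inI (inIB (F4 r p) (G4 r p)); ring.
- move=> d p hp; have [q1 [hq1 e1]] := F5 d p hp; have [q2 [hq2 e2]] := G5 d p hp.
  by exists (q1 - q2); split; [rewrite rpredB | apply: eq_inI (inIB e1 e2); ring].
Qed.

Definition var k (n : nat) : BPoly k := 'X_(inord n).
Arguments var k%_nat_scope n%_nat_scope.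

Lemma blkX k j (a : 'I_4) : blk k j 'X_a = 'X_(inord (4 * j + a)%N).
Proof. by rewrite /blk comp_mpolyXU -tnth_nth tnth_mktuple. Qed.

Lemma blk_var k j a : (a < 4)%nat -> blk k j 'X_(inord a) = var k (4 * j + a)%nat.
Proof. by move=> ha; rewrite blkX inordK. Qed.

Lemma blkD k j p q : blk k j (p + q) = blk k j p + blk k j q.
Proof. exact: comp_mpolyD. Qed.

Lemma blkM k j p q : blk k j (p * q) = blk k j p * blk k j q.
Proof. exact: rmorphM. Qed.

Lemma msymXU n (s : 'S_n) (i : 'I_n) : msym s ('X_i : {mpoly R[n]}) = 'X_(s i).
Proof.
rewrite msymX; congr 'X_[_]; apply/mnmP => j; rewrite !mnmE.
by rewrite -[in RHS](permKV s j) (inj_eq (@perm_inj _ s)).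
Qed.

(* The action of [sref i] on the 0-based indices of x_1, ..., x_4. *)
Definition swapn (i a : nat) : nat :=
  if a == i.-1 then i else if a == i then i.-1 else a.

Lemma swapn_lt i a : (0 < i < 4)%nat -> (a < 4)%nat -> (swapn i a < 4)%nat.
Proof.
by case/andP=> h0 h4 ha; rewrite /swapn; do 2?case: ifP => // _; case: i h0 h4 => // i _ /ltnW.
Qed.

Lemma sref_inord i a : (0 < i < 4)%nat -> (a < 4)%nat ->
  sref i (inord a) = inord (swapn i a).
Proof.
move=> hi ha; apply: val_inj; rewrite [RHS]inordK; last exact: swapn_lt.
case/andP: hi => h0 h4; have hi1 : (i.-1 < 4)%nat by case: i h0 h4 => // i _ /ltnW.
rewrite /sref /swapn; case: tpermP.
- by move=> /(congr1 val); rewrite /= !inordK // => ->; rewrite eqxx.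
- move=> /(congr1 val); rewrite /= !inordK // => ->; rewrite eqxx.
  by case: ifP => // /eqP; case: i h0 {h4 hi1}.
- move=> hx hy /=; rewrite inordK //; case: eqP => [e|_]; first by case: hx; rewrite e.
  by case: eqP => [e|_] //; case: hy; rewrite e.
Qed.

(* [n] indexes a variable of some tensor factor and [n.+4] the same variable
   of the next one. *)
Section Balance.
Variables (k : nat) (w : seq nat) (n : nat).
Hypotheses (hj : (n %/ 4 < k)%nat) (hi : (0 < nth 0 w (n %/ 4) < 4)%nat).

Let j := (n %/ 4)%nat.
Let a := (n %% 4)%nat.
Let ha : (a < 4)%nat. Proof. exact: ltn_pmod. Qed.
Let blk_lo : blk k j 'X_(inord a) = var k n.
Proof. by rewrite blk_var // (_ : (4 * j + a)%nat = n) // /j /a; lia. Qed.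
Let blk_hi : blk k j.+1 'X_(inord a) = var k n.+4.
Proof. by rewrite blk_var // (_ : (4 * j.+1 + a)%nat = n.+4) // /j /a; lia. Qed.

Lemma balance_fixed : swapn (nth 0 w (n %/ 4)) (n %% 4) == (n %% 4)%nat ->
  inI k w (var k n - var k n.+4).
Proof.
move=> hs; have := @inI_balance k w j 'X_(inord a) hj.
by rewrite /Defs.invariant msymXU sref_inord // (eqP hs) blk_lo blk_hi; apply.
Qed.

Hypothesis hl : (n %% 4).+1 == nth 0 w (n %/ 4).

Let ha1 : (a.+1 < 4)%nat. Proof. by rewrite /a (eqP hl); case/andP: hi. Qed.
Let blk_lo1 : blk k j 'X_(inord a.+1) = var k n.+1.
Proof. by rewrite blk_var // (_ : (4 * j + a.+1)%nat = n.+1) // /j /a; lia. Qed.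
Let blk_hi1 : blk k j.+1 'X_(inord a.+1) = var k n.+4.+1.
Proof. by rewrite blk_var // (_ : (4 * j.+1 + a.+1)%nat = n.+4.+1) // /j /a; lia. Qed.
Let sref_lo : sref (nth 0 w j) (inord a) = inord a.+1.
Proof. by rewrite sref_inord // /swapn -(eqP hl) eqxx. Qed.
Let sref_hi : sref (nth 0 w j) (inord a.+1) = inord a.
Proof. by rewrite sref_inord // /swapn -(eqP hl) /= gtn_eqF // eqxx. Qed.

Lemma balance_sum : inI k w (var k n + var k n.+1 - var k n.+4 - var k n.+4.+1).
Proof.
have := @inI_balance k w j ('X_(inord a) + 'X_(inord a.+1)) hj.
rewrite /Defs.invariant msymD !msymXU sref_lo sref_hi addrC => /(_ erefl).
by rewrite !blkD blk_lo blk_hi blk_lo1 blk_hi1; apply: eq_inI; ring.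
Qed.

Lemma balance_prod : inI k w (var k n * var k n.+1 - var k n.+4 * var k n.+4.+1).
Proof.
have := @inI_balance k w j ('X_(inord a) * 'X_(inord a.+1)) hj.
rewrite /Defs.invariant msymM !msymXU sref_lo sref_hi mulrC => /(_ erefl).
by rewrite !blkM blk_lo blk_hi blk_lo1 blk_hi1.
Qed.

End Balance.

Ltac balance := first [by apply: balance_fixed | by apply: balance_sum | by apply: balance_prod].

Ltac ideal_comb := repeat apply: inID; apply: inIMl; balance.

Lemma comp_mpoly_assoc n m l (f : {mpoly R[n]}) (T1 : n.-tuple {mpoly R[m]})
    (T2 : m.-tuple {mpoly R[l]}) :
  (f \mPo T1) \mPo T2 = f \mPo [tuple tnth T1 i \mPo T2 | i < n].
Proof.
elim/mpolyind: f => [|c mm p _ _ IH]; first by rewrite !comp_mpoly0.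
rewrite !comp_mpolyD !comp_mpolyZ IH !comp_mpolyX rmorph_prod /=; congr (_ *: _ + _).
by apply: eq_bigr => i _; rewrite rmorphXn /= tnth_mktuple.
Qed.

(* When [tab] is admissible
   for w, consecutive tensor factors are identified either directly or through
   s_(w_j), so that [ev tab] kills the balancing ideal of B_w. *)
Section Evaluation.
Variable k : nat.

Definition ev (tab : nat -> nat) : (nv k).-tuple {mpoly R[4]} :=
  [tuple 'X_(inord (tab i)) | i < nv k].

Definition admissible (tab : nat -> nat) (w : seq nat) : bool :=
  all (fun n => tab n < 4)%nat (iota 0 (nv k)) &&
  all (fun j => [&& (0 < nth 0 w j < 4)%nat &
     all (fun a => tab (4 * j.+1 + a)%nat == tab (4 * j + a)%nat) (iota 0 4) ||
     all (fun a => tab (4 * j.+1 + a)%nat == tab (4 * j + swapn (nth 0 w j) a)%nat) (iota 0 4)])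
   (iota 0 k).

Lemma ev_var tab n : (n < nv k)%nat -> var k n \mPo ev tab = 'X_(inord (tab n)).
Proof. by move=> hn; rewrite /var comp_mpolyXU -tnth_nth tnth_mktuple inordK. Qed.

Definition ev_blk (tab : nat -> nat) j : 4.-tuple {mpoly R[4]} :=
  [tuple 'X_(inord (tab (4 * j + a)%nat)) | a < 4].

Lemma blk_ev tab j f : (j <= k)%nat -> blk k j f \mPo ev tab = f \mPo ev_blk tab j.
Proof.
move=> hj; rewrite /blk comp_mpoly_assoc; congr (f \mPo _); apply: eq_from_tnth => a.
by rewrite !tnth_mktuple -/(var k _) ev_var //; have := ltn_ord a; lia.
Qed.

Lemma ev_inI tab w p : admissible tab w -> inI k w p -> p \mPo ev tab = 0.
Proof.
move=> /andP [_ /allP hok] [s [hs ->]]; rewrite raddf_sum /= big1_seq // => t /andP [_ /hs [hj hf]].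
rewrite rmorphM rmorphB /= !blk_ev //; last exact: ltnW.
suff -> : t.2 \mPo ev_blk tab t.1.2.+1 = t.2 \mPo ev_blk tab t.1.2 by rewrite subrr mulr0.
have := hok t.1.2; rewrite mem_iota => /(_ hj) /andP [hi /orP [/allP H|/allP H]].
  congr (_ \mPo _); apply: eq_from_tnth => a; rewrite !tnth_mktuple.
  by rewrite (eqP (H a _)) // mem_iota ltn_ord.
rewrite -[in RHS]hf msym_mPo; congr (_ \mPo _); apply: eq_from_tnth => a.
rewrite !tnth_mktuple (eqP (H a _)) ?mem_iota ?ltn_ord //=.
by rewrite -[in RHS](inord_val a) sref_inord ?inordK //; exact: swapn_lt.
Qed.

End Evaluation.

Lemma mnm1_inj n (i j : 'I_n) : (U_(i)%MM == U_(j)%MM :> 'X_{1..n}) = (i == j).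
Proof. by apply/eqP/eqP => [/mnmP /(_ j)|->//]; rewrite !mnm1E eqxx; case: eqP. Qed.

Lemma homog1E n (q : {mpoly R[n]}) : q \is 1.-homog ->
  q = \sum_(i < n) q@_U_(i) *: 'X_i.
Proof.
move=> hq; apply/mpolyP => m; rewrite raddf_sum /=.
under eq_bigr => i _ do rewrite mcoeffZ mcoeffX.
case: (boolP (mdeg m == 1%nat)) => [/mdeg1P [i /eqP ->]|hm].
  rewrite (bigD1 i) //= eqxx mulr1 big1 ?addr0 // => j hj.
  by rewrite mnm1_inj (negbTE hj) mulr0.
rewrite (dhomog_nemf_coeff hq hm) big1 // => i _.
by case: eqP => [hi|]; [move: hm; rewrite -hi mdeg1 | rewrite mulr0].
Qed.

Lemma homog1_lin k (q : BPoly k) : q \is 1.-homog ->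
  exists c : nat -> R, q = \sum_(i <- iota 0 (nv k)) (c i)%:MP * var k i.
Proof.
move/homog1E => qE; exists (fun i => q@_U_(inord i)); rewrite {1}qE.
rewrite -[iota 0 (nv k)]/(index_iota 0 (nv k)) big_mkord.
by apply: eq_bigr => i _; rewrite /var inord_val mul_mpolyC.
Qed.

Definition lin_form (s : seq nat) : {mpoly R[4]} := \sum_(a <- s) 'X_(inord a).

Section CentralEvaluation.
Variables (k : nat) (w : seq nat) (tab : nat -> nat).
Hypothesis adm : admissible k tab w.

Let tab_lt n : (n < nv k)%nat -> (tab n < 4)%nat.
Proof. by case/andP: adm => /allP h _ hn; apply: h; rewrite mem_iota. Qed.

Lemma mcoeff_ev_var n b : (n < nv k)%nat -> (b < 4)%nat ->
  (var k n \mPo ev k tab)@_U_(inord b) = (tab n == b)%:R.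
Proof.
by move=> hn hb; rewrite ev_var // mcoeffXU -val_eqE /= !inordK // tab_lt.
Qed.

Lemma mcoeff_ev_lin_form j s b : (j <= k)%nat -> all (fun a => a < 4)%nat s -> (b < 4)%nat ->
  (blk k j (lin_form s) \mPo ev k tab)@_U_(inord b) =
  (count (fun a => tab (4 * j + a)%nat == b) s)%:R.
Proof.
move=> hj /allP hs hb.
rewrite /lin_form; elim: s hs => [|a s IH] hs.
  by rewrite big_nil /blk comp_mpoly0 comp_mpoly0 mcoeff0.
rewrite big_cons blkD comp_mpolyD mcoeffD IH; last by move=> x hx; apply: hs; rewrite inE hx orbT.
have ha : (a < 4)%nat by apply: hs; apply: mem_head.
rewrite blk_var // mcoeff_ev_var //=; first by rewrite natrD.
by change (4 * j + a < (4 * k + 3).+1)%nat; lia.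
Qed.

End CentralEvaluation.

(* [ev tab] turns the centrality of q into (A_0 - A_k)(ev) * q(ev) = 0, and the
   [has] condition makes the first factor nonzero. *)
Lemma ev_central_coef k w tab s (q : BPoly k) (c : nat -> R) b :
  eqB k w (blk k 0 (lin_form s) * q) (q * blk k k (lin_form s)) ->
  q = \sum_(i <- iota 0 (nv k)) (c i)%:MP * var k i ->
  admissible k tab w -> all (fun a => a < 4)%nat s ->
  has (fun b' => count (fun a => tab a == b') s
                 != count (fun a => tab (4 * k + a)%nat == b') s) (iota 0 4) ->
  (b < 4)%nat -> \sum_(i <- iota 0 (nv k) | tab i == b) c i = 0.
Proof.
move=> hq qE adm hs /hasP [b' hb' hcount] hb.
rewrite -[iota 0 (nv k)]/(index_iota 0 (nv k)) big_mkord.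
rewrite -[iota 0 (nv k)]/(index_iota 0 (nv k)) big_mkord in qE.
have hb'4 : (b' < 4)%nat by move: hb'; rewrite mem_iota.
have ev_q : q \mPo ev k tab = 0.
  have := ev_inI adm hq; rewrite rmorphB !rmorphM /= [X in X - _]mulrC -mulrBr => /eqP.
  rewrite mulf_eq0 => /orP [/eqP //|/eqP /(congr1 (mcoeff U_(inord b')))].
  rewrite mcoeffB !(mcoeff_ev_lin_form adm) // mcoeff0 => /eqP; rewrite subr_eq0 eqr_nat.
  by rewrite (@eq_count _ _ (fun a => tab a == b')) ?(negbTE hcount) // => a; rewrite muln0.
move: ev_q; rewrite qE raddf_sum /= => /(congr1 (mcoeff U_(inord b))).
rewrite raddf_sum mcoeff0 => e; rewrite -[RHS]e big_mkcond; apply: eq_bigr => i _.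
by rewrite rmorphM /= comp_mpolyC mcoeffCM (mcoeff_ev_var adm) //; case: eqP; rewrite ?mulr1 ?mulr0.
Qed.

Notation W232 := [:: 2; 3; 2]%N.
Notation W323 := [:: 3; 2; 3]%N.

(* The admissible table of the subexpression [e] of [w]: factor j+1 is factor j,
   twisted by s_(w_j) when [e_j] holds. *)
Fixpoint walk_blk (w : seq nat) (e : seq bool) (j a : nat) : nat :=
  if j is j'.+1 then walk_blk w e j' (if nth false e j' then swapn (nth 0 w j') a else a)
  else a.

Definition walk (w : seq nat) (e : seq bool) (n : nat) : nat :=
  walk_blk w e (n %/ 4)%nat (n %% 4)%nat.

Ltac expand_sum16 := rewrite -[iota 0 (nv 3%nat)]/(iota 0 16) /= !big_cons big_nil addr0.

Ltac ev_eq h :=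
  rewrite -[iota 0 (nv 3%nat)]/(iota 0 16) -big_filter /= !big_cons big_nil addr0 !addrA in h.

(* E1, ..., E7 are independent linear conditions on the coordinates c of q, and
   the displayed decomposition writes q as an element of the ideal plus
   multiples of them. *)
Lemma deg1_central_323 (q : BPoly 3%nat) : q \is 1.-homog ->
  eqB 3 W323 (blk 3 0 (lin_form [:: 1; 2]%nat) * q) (q * blk 3 3 (lin_form [:: 1; 2]%nat)) ->
  inI 3 W323 q.
Proof.
move=> hq hc; have [c qE] := homog1_lin hq.
have E e b := ev_central_coef (tab := walk W323 e) (b := b) hc qE.
have E1 := E [:: false; false; true] 0%nat isT isT isT isT; ev_eq E1.
have E2 := E [:: false; false; true] 1%nat isT isT isT isT; ev_eq E2.
have E3 := E [:: false; false; true] 2%nat isT isT isT isT; ev_eq E3.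
have E4 := E [:: false; false; true] 3%nat isT isT isT isT; ev_eq E4.
have E5 := E [:: false; true; true] 1%nat isT isT isT isT; ev_eq E5.
have E6 := E [:: true; false; false] 2%nat isT isT isT isT; ev_eq E6.
have E7 := E [:: true; true; false] 1%nat isT isT isT isT; ev_eq E7.
apply: (@eq_inI _ _ ((- c 4 - c 8 - c 12)%:MP * (var 3 0 - var 3 4)
  + (- c 5 - c 10 - c 15)%:MP * (var 3 1 - var 3 5)
  + (- c 7 - c 11 - c 15)%:MP * (var 3 2 + var 3 3 - var 3 6 - var 3 7)
  + (- c 8 - c 12)%:MP * (var 3 4 - var 3 8) + (- c 11 - c 15)%:MP * (var 3 7 - var 3 11)
  + (- c 10 - c 15)%:MP * (var 3 5 + var 3 6 - var 3 9 - var 3 10)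
  + (- c 12)%:MP * (var 3 8 - var 3 12) + (- c 13)%:MP * (var 3 9 - var 3 13)
  + (- c 15)%:MP * (var 3 10 + var 3 11 - var 3 14 - var 3 15)
  + (c 0 + c 4 + c 8 + c 12)%:MP * var 3 0 + (c 1 + c 5 + c 9 + c 13)%:MP * var 3 9
  + (c 2 + c 6 + c 10 + c 15)%:MP * var 3 6 + (c 3 + c 7 + c 11 + c 14)%:MP * var 3 3
  + (c 1 + c 5 + c 10 + c 15)%:MP * (var 3 1 + var 3 3 - var 3 9 - var 3 14)
  + (c 2 + c 7 + c 11 + c 15)%:MP * (var 3 2 - var 3 6)
  + (c 1 + c 5 + c 10 + c 14)%:MP * (var 3 14 - var 3 3))).
  by rewrite [in RHS]qE; expand_sum16; ring.
rewrite E1 E2 E3 E4 E5 E6 E7 mpolyC0 !mul0r !addr0.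
ideal_comb.
Qed.

Lemma deg1_central_232 (q : BPoly 3%nat) : q \is 1.-homog ->
  eqB 3 W232 (blk 3 0 (lin_form [:: 1; 1; 2; 3]%nat) * q)
    (q * blk 3 3 (lin_form [:: 1; 1; 2; 3]%nat)) ->
  inI 3 W232 q.
Proof.
move=> hq hc; have [c qE] := homog1_lin hq.
have E e b := ev_central_coef (tab := walk W232 e) (b := b) hc qE.
have E1 := E [:: false; false; true] 0%nat isT isT isT isT; ev_eq E1.
have E2 := E [:: false; false; true] 1%nat isT isT isT isT; ev_eq E2.
have E3 := E [:: false; false; true] 2%nat isT isT isT isT; ev_eq E3.
have E4 := E [:: false; false; true] 3%nat isT isT isT isT; ev_eq E4.
have E5 := E [:: false; true; true] 2%nat isT isT isT isT; ev_eq E5.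
have E6 := E [:: true; false; false] 1%nat isT isT isT isT; ev_eq E6.
have E7 := E [:: true; true; false] 1%nat isT isT isT isT; ev_eq E7.
apply: (@eq_inI _ _ ((- c 4 - c 8 - c 12)%:MP * (var 3 0 - var 3 4)
  + (- c 7 - c 11 - c 15)%:MP * (var 3 3 - var 3 7)
  + (- c 6 - c 11 - c 15)%:MP * (var 3 1 + var 3 2 - var 3 5 - var 3 6)
  + (- c 8 - c 12)%:MP * (var 3 4 - var 3 8) + (- c 9 - c 14)%:MP * (var 3 5 - var 3 9)
  + (- c 11 - c 15)%:MP * (var 3 6 + var 3 7 - var 3 10 - var 3 11)
  + (- c 12)%:MP * (var 3 8 - var 3 12) + (- c 15)%:MP * (var 3 11 - var 3 15)
  + (- c 14)%:MP * (var 3 9 + var 3 10 - var 3 13 - var 3 14)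
  + (c 0 + c 4 + c 8 + c 12)%:MP * var 3 0 + (c 1 + c 5 + c 9 + c 14)%:MP * var 3 5
  + (c 2 + c 6 + c 10 + c 13)%:MP * var 3 13 + (c 3 + c 7 + c 11 + c 15)%:MP * var 3 3
  + (c 2 + c 6 + c 11 + c 15)%:MP * (var 3 2 - var 3 13)
  + (c 1 + c 6 + c 10 + c 14)%:MP * (var 3 10 - var 3 13)
  + (c 1 + c 6 + c 11 + c 15)%:MP * (var 3 1 - var 3 5 - var 3 10 + var 3 13))).
  by rewrite [in RHS]qE; expand_sum16; ring.
rewrite E1 E2 E3 E4 E5 E6 E7 mpolyC0 !mul0r !addr0.
ideal_comb.
Qed.

Definition boundary (n : nat) : bool := ((n < 4) || (12 <= n < 16))%nat.

Section Annihilation.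
Variables (u v : seq nat) (G : BPoly 3%nat -> BPoly 3%nat).
Hypotheses (hG : bimod_map 3 u v G) (hG1 : inI 3 v (G 1)).

Definition killed p := inI 3 v (G p).

Let linG : forall (a : R) p q, G (a *: p + q) = a *: G p + G q.
Proof. by case: hG. Qed.

Lemma killedD p q : killed p -> killed q -> killed (p + q).
Proof. by rewrite /killed (linD linG); apply: inID. Qed.

Lemma killedB p q : killed p -> killed q -> killed (p - q).
Proof. by rewrite /killed (linB linG); apply: inIB. Qed.

Lemma killedZ c p : killed p -> killed (c *: p).
Proof. by rewrite /killed (linZ linG); apply: inIZ. Qed.

Lemma killed_eqB p q : eqB 3 u p q -> killed q -> killed p.
Proof. by move=> /(bimod_map_eqB hG) h hq; have := inID h hq; rewrite subrK. Qed.

Lemma killedMl r p : killed p -> killed (blk 3 0 r * p).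
Proof.
by case: hG => _ _ hl _ _ hp; have := inID (hl r p) (inIMl (blk 3 0 r) hp); rewrite subrK.
Qed.

Lemma killedMr r p : killed p -> killed (p * blk 3 3 r).
Proof.
by case: hG => _ _ _ hr _ hp; have := inID (hr r p) (inIMr (blk 3 3 r) hp); rewrite subrK.
Qed.

Lemma killedMX p n : boundary n -> killed p -> killed (p * var 3 n).
Proof.
case/orP=> hn hp.
  by rewrite mulrC (_ : n = 4 * 0 + n)%nat // -blk_var //; apply: killedMl.
have ha : (n - 12 < 4)%nat by lia.
rewrite (_ : n = 4 * 3 + (n - 12))%nat; last by lia.
by rewrite -blk_var //; apply: killedMr.
Qed.

Lemma killed_boundary_prod a b : boundary a -> boundary b -> killed (var 3 a * var 3 b).
Proof. by move=> ha hb; rewrite -[var 3 a]mul1r; do 2!apply: killedMX => //. Qed.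

Lemma killed_var p n r : eqB 3 u (var 3 n) r -> killed (p * r) -> killed (p * var 3 n).
Proof. by move=> h; apply: killed_eqB; rewrite /eqB -mulrBr; apply: inIMl. Qed.

Lemma killed_all U : killed U ->
  (forall p, killed p -> killed (p * U) -> killed (p * U * U)) ->
  (forall p, killed p -> killed (p * U) -> forall n, (4 <= n < 12)%nat -> killed (p * var 3 n)) ->
  forall p, killed p.
Proof.
move=> hU hUU hstep.
(* The p such that G kills both p and p U contain 1 and are stable under
   multiplication by every variable. *)
pose P q := killed q /\ killed (q * U).
have PX q (i : 'I_(nv 3)) : P q -> P (q * 'X_i).
  case=> h1 h2; rewrite -[i]inord_val -/(var 3 i) /P mulrAC.
  have [/killedMX hi|hi] := boolP (boundary i); first by split; apply: hi.
  have hn : (4 <= i < 12)%nat by move: hi (ltn_ord i); rewrite /boundary; lia.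
  by split; apply: hstep => //; apply: hUU.
have Pm (m : 'X_{1..nv 3}) : P 'X_[m].
  rewrite mpolyXE_id; elim: (index_enum _) => [|i r IH]; first by rewrite big_nil /P mul1r; split.
  rewrite big_cons mulrC; elim: (m i) => [|e IHe]; first by rewrite expr0 mulr1.
  by rewrite exprSr mulrA; apply: PX.
move=> p; rewrite [p]mpolyE; elim: (msupp p) => [|m r IH].
  by rewrite big_nil /killed (lin0 linG); apply: inI0.
by rewrite big_cons; apply: killedD => //; apply: killedZ; case: (Pm m).
Qed.

Lemma killed_central U A : U \is 1.-homog ->
  killed (blk 3 0 A * U - U * blk 3 3 A) ->
  (forall q : BPoly 3%nat, q \is 1.-homog ->
     eqB 3 v (blk 3 0 A * q) (q * blk 3 3 A) -> inI 3 v q) ->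
  killed U.
Proof.
move=> hU hc hdeg; case: hG => _ _ hl hr hdg.
have cGU : eqB 3 v (blk 3 0 A * G U) (G U * blk 3 3 A).
  by apply: eq_inI (inIB (inIB hc (hl A U)) (inIN (hr A U))); rewrite (linB linG); ring.
have [q [hq e]] := hdg 1%nat U hU.
have cq : eqB 3 v (blk 3 0 A * q) (q * blk 3 3 A).
  by apply: eq_inI (inID (inIB cGU (inIMl (blk 3 0 A) e)) (inIMr (blk 3 3 A) e)); ring.
by have := inID e (hdeg q hq cq); rewrite subrK.
Qed.

End Annihilation.

Ltac ideal_as t := rewrite /eqB; apply: (@eq_inI _ _ t); [ring | ideal_comb].

Ltac kill hG hG1 :=
  rewrite ?mulrDr ?mulrN; repeat first [apply: (killedB hG) | apply: (killedD hG)];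
  first [ assumption | by apply: (killed_boundary_prod hG hG1)
        | apply: (killedMX hG); [done | kill hG hG1] ].

Ltac reduce_var hG hG1 r t := apply: (killed_var hG (r := r)); [ideal_as t | kill hG hG1].

Section Annihilation232.
Variable G : BPoly 3%nat -> BPoly 3%nat.
Hypotheses (hG : bimod_map 3 W232 W323 G) (hG1 : inI 3 W323 (G 1)).

Lemma killed232_gen2 p : killed W323 G p -> killed W323 G (p * var 3 5) ->
  killed W323 G (p * var 3 5 * var 3 5).
Proof.
move=> hp hpU.
apply: (killed_eqB hG (q := p * var 3 5 * var 3 1 + p * var 3 5 * var 3 2 - p * var 3 1 * var 3 2)).
  ideal_as ((- (p * var 3 5)) * (var 3 1 + var 3 2 - var 3 5 - var 3 6)
            + p * (var 3 1 * var 3 2 - var 3 5 * var 3 6)).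
kill hG hG1.
Qed.

Lemma killed232_inner p : killed W323 G p -> killed W323 G (p * var 3 5) ->
  forall n, (4 <= n < 12)%nat -> killed W323 G (p * var 3 n).
Proof.
move=> hp hpU [|[|[|[|[|[|[|[|[|[|[|[|n]]]]]]]]]]]] //= _.
- by reduce_var hG hG1 (var 3 0) ((-1) * (var 3 0 - var 3 4)).
- by reduce_var hG hG1 (var 3 1 + var 3 2 - var 3 5)
    ((-1) * (var 3 1 + var 3 2 - var 3 5 - var 3 6)).
- by reduce_var hG hG1 (var 3 3) ((-1) * (var 3 3 - var 3 7)).
- by reduce_var hG hG1 (var 3 0) ((-1) * (var 3 0 - var 3 4) + (-1) * (var 3 4 - var 3 8)).
- by reduce_var hG hG1 (var 3 5) ((-1) * (var 3 5 - var 3 9)).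
- by reduce_var hG hG1 (var 3 13 + var 3 14 - var 3 5)
    (1 * (var 3 9 + var 3 10 - var 3 13 - var 3 14) + 1 * (var 3 5 - var 3 9)).
- by reduce_var hG hG1 (var 3 15) (1 * (var 3 11 - var 3 15)).
Qed.

Lemma killed232_gen : killed W323 G (var 3 5).
Proof.
apply: (killed_central hG (A := lin_form [:: 1; 2]%nat)); last exact: deg1_central_323.
  by rewrite dhomogX /= mdeg1.
have -> : blk 3 0 (lin_form [:: 1; 2]%nat) = var 3 1 + var 3 2.
  by rewrite /lin_form big_cons big_seq1 blkD !blk_var.
have -> : blk 3 3 (lin_form [:: 1; 2]%nat) = var 3 13 + var 3 14.
  by rewrite /lin_form big_cons big_seq1 blkD !blk_var.
apply: (killed_eqB hG (q := var 3 1 * var 3 2 - var 3 13 * var 3 14)); last by kill hG hG1.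
ideal_as (var 3 5 * (var 3 1 + var 3 2 - var 3 5 - var 3 6)
  + (-1) * (var 3 1 * var 3 2 - var 3 5 * var 3 6)
  + var 3 9 * (var 3 9 + var 3 10 - var 3 13 - var 3 14)
  + (-1) * (var 3 9 * var 3 10 - var 3 13 * var 3 14)
  + (var 3 5 + var 3 9 - var 3 13 - var 3 14) * (var 3 5 - var 3 9)).
Qed.

Lemma killed232 p : killed W323 G p.
Proof. exact: (killed_all hG hG1 killed232_gen killed232_gen2 killed232_inner). Qed.

End Annihilation232.

Section Annihilation323.
Variable G : BPoly 3%nat -> BPoly 3%nat.
Hypotheses (hG : bimod_map 3 W323 W232 G) (hG1 : inI 3 W232 (G 1)).

Lemma killed323_gen2 p : killed W232 G p -> killed W232 G (p * var 3 6) ->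
  killed W232 G (p * var 3 6 * var 3 6).
Proof.
move=> hp hpU.
apply: (killed_eqB hG (q := p * var 3 6 * var 3 2 + p * var 3 6 * var 3 3 - p * var 3 2 * var 3 3)).
  ideal_as ((- (p * var 3 6)) * (var 3 2 + var 3 3 - var 3 6 - var 3 7)
            + p * (var 3 2 * var 3 3 - var 3 6 * var 3 7)).
kill hG hG1.
Qed.

Lemma killed323_inner p : killed W232 G p -> killed W232 G (p * var 3 6) ->
  forall n, (4 <= n < 12)%nat -> killed W232 G (p * var 3 n).
Proof.
move=> hp hpU [|[|[|[|[|[|[|[|[|[|[|[|n]]]]]]]]]]]] //= _.
- by reduce_var hG hG1 (var 3 0) ((-1) * (var 3 0 - var 3 4)).
- by reduce_var hG hG1 (var 3 1) ((-1) * (var 3 1 - var 3 5)).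
- by reduce_var hG hG1 (var 3 2 + var 3 3 - var 3 6)
    ((-1) * (var 3 2 + var 3 3 - var 3 6 - var 3 7)).
- by reduce_var hG hG1 (var 3 0) ((-1) * (var 3 0 - var 3 4) + (-1) * (var 3 4 - var 3 8)).
- by reduce_var hG hG1 (var 3 13) (1 * (var 3 9 - var 3 13)).
- by reduce_var hG hG1 (var 3 1 + var 3 6 - var 3 13)
    ((-1) * (var 3 5 + var 3 6 - var 3 9 - var 3 10) + (-1) * (var 3 1 - var 3 5)
     + (-1) * (var 3 9 - var 3 13)).
- by reduce_var hG hG1 (var 3 2 + var 3 3 - var 3 6)
    ((-1) * (var 3 7 - var 3 11) + (-1) * (var 3 2 + var 3 3 - var 3 6 - var 3 7)).
Qed.

Lemma killed323_gen : killed W232 G (var 3 6).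
Proof.
apply: (killed_central hG (A := lin_form [:: 1; 1; 2; 3]%nat)); last exact: deg1_central_232.
  by rewrite dhomogX /= mdeg1.
have -> : blk 3 0 (lin_form [:: 1; 1; 2; 3]%nat) = var 3 1 + var 3 1 + var 3 2 + var 3 3.
  by rewrite /lin_form !big_cons big_nil !blkD !blk_var // /blk comp_mpoly0 addr0 !addrA.
have -> : blk 3 3 (lin_form [:: 1; 1; 2; 3]%nat) = var 3 13 + var 3 13 + var 3 14 + var 3 15.
  by rewrite /lin_form !big_cons big_nil !blkD !blk_var // /blk comp_mpoly0 addr0 !addrA.
apply: (killed_eqB hG (q := var 3 2 * var 3 3 - var 3 1 * var 3 1 + var 3 1 * var 3 13
    + var 3 1 * var 3 13 + var 3 1 * var 3 14 + var 3 1 * var 3 15 - var 3 13 * var 3 13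
    - var 3 13 * var 3 14 - var 3 13 * var 3 15 - var 3 14 * var 3 15)); last by kill hG hG1.
ideal_as (var 3 10 * (var 3 10 + var 3 11 - var 3 14 - var 3 15)
  + (-1) * (var 3 10 * var 3 11 - var 3 14 * var 3 15)
  + (var 3 10 + var 3 6 + var 3 1 - var 3 13 - var 3 14 - var 3 15) * (var 3 1 - var 3 5)
  + (var 3 10 + var 3 6 + var 3 1 - var 3 13 - var 3 14 - var 3 15) * (var 3 9 - var 3 13)
  + (var 3 10 + var 3 6 + var 3 1 - var 3 13 - var 3 14 - var 3 15)
    * (var 3 5 + var 3 6 - var 3 9 - var 3 10)
  + var 3 6 * (var 3 2 + var 3 3 - var 3 6 - var 3 7)
  + (-1) * (var 3 2 * var 3 3 - var 3 6 * var 3 7)).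
Qed.

Lemma killed323 p : killed W232 G p.
Proof. exact: (killed_all hG hG1 killed323_gen killed323_gen2 killed323_inner). Qed.

End Annihilation323.

Section LinearExtension.
Variables (n : nat) (V : lmodType R) (Phi : 'X_{1..n} -> V).

Definition lin_ext (p : {mpoly R[n]}) : V := \sum_(m <- msupp p) p@_m *: Phi m.

Lemma lin_ext_seq p r : uniq r -> {subset msupp p <= r} ->
  lin_ext p = \sum_(m <- r) p@_m *: Phi m.
Proof.
move=> ur sub; rewrite [RHS](bigID (fun m => m \in msupp p)) /=.
rewrite [X in _ = _ + X]big1 ?addr0; last by move=> m hm; rewrite memN_msupp_eq0 // scale0r.
rewrite -big_filter; apply: perm_big; apply: uniq_perm; rewrite ?filter_uniq ?msupp_uniq //.
by move=> m; rewrite mem_filter; apply/idP/andP => [h|[]//]; split=> //; apply: sub.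
Qed.

Lemma lin_ext_lin (a : R) p q : lin_ext (a *: p + q) = a *: lin_ext p + lin_ext q.
Proof.
set r := undup (msupp p ++ msupp q ++ msupp (a *: p + q)).
rewrite !(@lin_ext_seq _ r) ?undup_uniq //; try by move=> m hm; rewrite mem_undup !mem_cat hm ?orbT.
rewrite scaler_sumr -big_split /=; apply: eq_bigr => m _.
by rewrite mcoeffD mcoeffZ scalerDl scalerA.
Qed.

Lemma lin_extX m : lin_ext 'X_[m] = Phi m.
Proof. by rewrite /lin_ext msuppX big_seq1 mcoeffX eqxx scale1r. Qed.

End LinearExtension.

(* For a monomial M in the 7 tensor factors of B_w, |w| = 6, [mid M] is its part in
   the factors 2..5 (moved to 0..3), and [outer_left M], [outer_right M] are its
   parts in the factors 0, 1 and 6; by [idtensE], Id (x) F (x) Id maps M to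
   [embed M (F (mid M))]. *)
Definition outer_left (m : 'X_{1..nv 6%nat}) : BPoly 6%nat :=
  \prod_(i < nv 6%nat | (i %/ 4 < 2)%nat) 'X_i ^+ m i.
Definition outer_right (m : 'X_{1..nv 6%nat}) : BPoly 6%nat :=
  \prod_(i < nv 6%nat | (5 < i %/ 4)%nat) 'X_i ^+ m i.
Definition shift_mid : (nv 3%nat).-tuple (BPoly 6%nat) := [tuple var 6 (8 + i) | i < nv 3%nat].
Definition mid (m : 'X_{1..nv 6%nat}) : BPoly 3%nat :=
  \prod_(i < nv 3%nat) 'X_i ^+ m (inord (8 + i)).
Definition embed (m : 'X_{1..nv 6%nat}) (q : BPoly 3%nat) : BPoly 6%nat :=
  outer_left m * (q \mPo shift_mid) * outer_right m.

Lemma idtensE (F : BPoly 3%nat -> BPoly 3%nat) p :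
  idtens 2 1 F p = lin_ext (fun m => embed m (F (mid m))) p.
Proof. by []. Qed.

Section BigNat.
Variable V : comPzRingType.

Lemma big_nat_all (F : nat -> V) (P : pred nat) m n :
  (forall i, (m <= i < n)%nat -> P i) ->
  \prod_(m <= i < n | P i) F i = \prod_(m <= i < n) F i.
Proof.
move=> h; rewrite big_nat_cond [RHS]big_nat_cond; apply: eq_bigl => i.
by case: (boolP (m <= i < n)%nat) => //= /h ->.
Qed.

Lemma big_nat_none (F : nat -> V) (P : pred nat) m n :
  (forall i, (m <= i < n)%nat -> ~~ P i) -> \prod_(m <= i < n | P i) F i = 1.
Proof.
move=> h; rewrite big_nat_cond big_pred0 // => i.
by case: (boolP (m <= i < n)%nat) => //= /h /negbTE.
Qed.

End BigNat.

Definition xpow (m : 'X_{1..nv 6%nat}) (k : nat) : BPoly 6%nat := var 6 k ^+ m (inord k).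

Lemma prod_ord_nat (P : pred nat) (m : 'X_{1..nv 6%nat}) :
  \prod_(i < nv 6%nat | P i) 'X_i ^+ m i = \prod_(0 <= i < 28 | P i) xpow m i.
Proof. by rewrite big_mkord; apply: eq_bigr => i _; rewrite /xpow /var inord_val. Qed.

Lemma outer_leftE m : outer_left m = \prod_(0 <= i < 8) xpow m i.
Proof.
rewrite /outer_left (prod_ord_nat (fun i => i %/ 4 < 2)%nat) (big_cat_nat _ (n := 8)) //=.
rewrite [X in _ * X]big_nat_none ?mulr1 => [|i /andP[h1 h2]]; last by apply/negP; lia.
by apply: big_nat_all => i /andP[h1 h2]; lia.
Qed.

Lemma outer_rightE m : outer_right m = \prod_(24 <= i < 28) xpow m i.
Proof.
rewrite /outer_right (prod_ord_nat (fun i => 5 < i %/ 4)%nat) (big_cat_nat _ (n := 24)) //=.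
rewrite big_nat_none ?mul1r => [|i /andP[h1 h2]]; last by apply/negP; lia.
by apply: big_nat_all => i /andP[h1 h2]; lia.
Qed.

Lemma monomialE (m : 'X_{1..nv 6%nat}) : 'X_[m] =
  \prod_(0 <= i < 8) xpow m i * \prod_(8 <= i < 24) xpow m i * \prod_(24 <= i < 28) xpow m i.
Proof.
rewrite mpolyXE_id (prod_ord_nat xpredT) (big_cat_nat _ (n := 8)) //=.
by rewrite (big_cat_nat _ (m := 8) (n := 24)) //= mulrA.
Qed.

Definition merge (M : 'X_{1..nv 6%nat}) (m' : 'X_{1..nv 3%nat}) : 'X_{1..nv 6%nat} :=
  [multinom (if (8 <= i < 24)%nat then m' (inord (i - 8)) else M i) | i < nv 6%nat].

Lemma merge_out M m' i : ~~ (8 <= i < 24)%nat -> (i < 28)%nat ->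
  merge M m' (inord i) = M (inord i).
Proof. by move=> h hi; rewrite /merge mnmE inordK // (negbTE h). Qed.

Lemma merge_in M m' i : (i < 16)%nat -> merge M m' (inord (8 + i)) = m' (inord i).
Proof.
move=> hi; rewrite /merge mnmE inordK; last by lia.
by rewrite ifT ?addKn //; apply/andP; split; lia.
Qed.

Lemma embedX M m' : embed M 'X_[m'] = 'X_[merge M m'].
Proof.
rewrite /embed outer_leftE outer_rightE comp_mpolyX monomialE; congr (_ * _ * _).
- by apply: eq_big_nat => i /andP [h1 h2]; rewrite /xpow merge_out //; try apply/negP; lia.
- rewrite (big_addn 0 24 8) (_ : (24 - 8)%nat = nv 3%nat) // big_mkord.
  by apply: eq_bigr => i _; rewrite tnth_mktuple /xpow (addnC i 8) merge_in ?inord_val.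
- by apply: eq_big_nat => i /andP [h1 h2]; rewrite /xpow merge_out //; try apply/negP; lia.
Qed.

Lemma outer_left_merge M m' : outer_left (merge M m') = outer_left M.
Proof.
rewrite !outer_leftE; apply: eq_big_nat => i /andP [h1 h2].
by rewrite /xpow merge_out //; try apply/negP; lia.
Qed.

Lemma outer_right_merge M m' : outer_right (merge M m') = outer_right M.
Proof.
rewrite !outer_rightE; apply: eq_big_nat => i /andP [h1 h2].
by rewrite /xpow merge_out //; try apply/negP; lia.
Qed.

Lemma mid_merge M m' : mid (merge M m') = 'X_[m'].
Proof.
rewrite /mid mpolyXE_id; apply: eq_bigr => i _.
by rewrite merge_in ?inord_val //; apply: ltn_ord.
Qed.

Lemma embed_sum M (r : seq 'X_{1..nv 3%nat}) (c : 'X_{1..nv 3%nat} -> R)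
    (P : 'X_{1..nv 3%nat} -> BPoly 3%nat) :
  embed M (\sum_(m <- r) c m *: P m) = \sum_(m <- r) c m *: embed M (P m).
Proof.
rewrite /embed raddf_sum /= mulr_sumr mulr_suml; apply: eq_bigr => m _.
by rewrite comp_mpolyZ -scalerAr -scalerAl.
Qed.

Lemma embedB M p q : embed M (p - q) = embed M p - embed M q.
Proof. by rewrite /embed rmorphB /= mulrBr mulrBl. Qed.

Lemma idtens_lin F (a : R) p q :
  idtens 2 1 F (a *: p + q) = a *: idtens 2 1 F p + idtens 2 1 F q.
Proof. by rewrite !idtensE lin_ext_lin. Qed.

Lemma idtensX F M : idtens 2 1 F 'X_[M] = embed M (F (mid M)).
Proof. by rewrite idtensE lin_extX. Qed.

Lemma idtens_embed F M q :
  (forall (a : R) (p q : BPoly 3%nat), F (a *: p + q) = a *: F p + F q) ->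
  idtens 2 1 F (embed M q) = embed M (F q).
Proof.
move=> linF; rewrite {1}[q]mpolyE embed_sum (lin_sum (@idtens_lin F)).
under eq_bigr => m _ do rewrite (linZ (@idtens_lin F)) embedX idtensX {1}/embed
  outer_left_merge outer_right_merge mid_merge -/(embed M _).
rewrite -embed_sum [in RHS](mpolyE q) (lin_sum linF); congr (embed M _).
by apply: eq_bigr => m _; rewrite (linZ linF).
Qed.

Lemma blk_shift j f : (j <= 3)%nat -> blk 3 j f \mPo shift_mid = blk 6 j.+2 f.
Proof.
move=> hj; rewrite /blk comp_mpoly_assoc; congr (f \mPo _); apply: eq_from_tnth => a.
rewrite !tnth_mktuple comp_mpolyXU -tnth_nth tnth_mktuple; congr 'X_(_).
have ha := ltn_ord a; apply: val_inj => /=; rewrite !inordK //; lia.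
Qed.

Lemma shift_inI w W q : (forall j, (j < 3)%nat -> nth 0 W j.+2 = nth 0 w j) ->
  inI 3 w q -> inI 6 W (q \mPo shift_mid).
Proof.
move=> hW [s [hs ->]]; rewrite raddf_sum /=.
exists [seq ((t.1.1 \mPo shift_mid, t.1.2.+2), t.2) | t <- s]; split.
  by move=> t /mapP [t' /hs [h1 h2] ->] /=; split; [move: h1; rewrite /ltn /=; lia | rewrite hW].
rewrite big_map; apply: eq_big_seq => t /hs [h1 _].
by rewrite rmorphM rmorphB /= !blk_shift //; move: h1; rewrite /ltn /=; lia.
Qed.

Lemma embed_inI w W M q : (forall j, (j < 3)%nat -> nth 0 W j.+2 = nth 0 w j) ->
  inI 3 w q -> inI 6 W (embed M q).
Proof. by move=> hW hq; rewrite /embed; apply: inIMr; apply: inIMl; exact: (shift_inI hW hq). Qed.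

Lemma bimod_map_fgfB k u v f g : braid_map k u v f -> braid_map k v u g ->
  bimod_map k u v (fun p => f (g (f p)) - f p).
Proof.
move=> /braid_map_bimod hf /braid_map_bimod hg.
exact: bimod_mapB (bimod_map_comp (bimod_map_comp hf hg) hf) hf.
Qed.

Lemma braid_map_fgf1 k u v f g : braid_map k u v f -> braid_map k v u g ->
  inI k v (f (g (f 1)) - f 1).
Proof.
move=> hf hg; apply: (bimod_map_eqB (braid_map_bimod hf)).
exact: eqB_trans (bimod_map_eqB (braid_map_bimod hg) (braid_map1 hf)) (braid_map1 hg).
Qed.

Lemma idtens_fgf u v W f g : braid_map 3 u v f -> braid_map 3 v u g ->
  (forall q, inI 3 v (f (g (f q)) - f q)) ->
  (forall j, (j < 3)%nat -> nth 0 W j.+2 = nth 0 v j) ->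
  forall p : BPoly 6%nat,
    eqB 6 W (idtens 2 1 f (idtens 2 1 g (idtens 2 1 f p))) (idtens 2 1 f p).
Proof.
move=> hf hg hfgf hW p.
have [linf _ _ _ _] := braid_map_bimod hf; have [ling _ _ _ _] := braid_map_bimod hg.
pose D p := idtens 2 1 f (idtens 2 1 g (idtens 2 1 f p)) - idtens 2 1 f p.
have linD (a : R) p1 q1 : D (a *: p1 + q1) = a *: D p1 + D q1.
  by rewrite /D !idtens_lin scalerBr; ring.
rewrite /eqB -/(D p) (mpolyE p) (lin_sum linD); apply: inI_sum => M.
rewrite (linZ linD); apply: inIZ.
by rewrite /D !idtensX !idtens_embed // -embedB; exact: embed_inI hW (hfgf _).
Qed.

Unset Implicit Arguments.
Local Close Scope ring_scope.

Theorem lemma3p9 (f23 f32 : BPoly 3 -> BPoly 3) :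
  braid_map 3 [:: 2; 3; 2]%N [:: 3; 2; 3]%N f23 ->
  braid_map 3 [:: 3; 2; 3]%N [:: 2; 3; 2]%N f32 ->
  (forall p : BPoly 6,
     eqB 6 wB (idtens 2 1 f23 (idtens 2 1 f32 (idtens 2 1 f23 p)))
              (idtens 2 1 f23 p)) /\
  (forall p : BPoly 6,
     eqB 6 wA (idtens 2 1 f32 (idtens 2 1 f23 (idtens 2 1 f32 p)))
              (idtens 2 1 f32 p)).
Proof.
move=> h23 h32; split.
- apply: (idtens_fgf h23 h32); last by case=> [|[|[|]]].
  exact: killed232 (bimod_map_fgfB h23 h32) (braid_map_fgf1 h23 h32).
- apply: (idtens_fgf h32 h23); last by case=> [|[|[|]]].
  exact: killed323 (bimod_map_fgfB h32 h23) (braid_map_fgf1 h32 h23).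
Qed.
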